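(* Let $m$ be an odd positive integer and $n$ a positive integer. Then there is no non-symmetric tensor $\mathbb{A}\in T_{m,n}$ that is a $P$ tensor.
   Context: $T_{m,n}$ denotes the set of real $m$th order $n$-dimensional tensors $\mathbb{A}=(a_{i_1i_2\ldots i_m})$ with $i_j\in[n]=\{1,\ldots,n\}$. A tensor is symmetric if its entries $a_{i_1\ldots i_m}$ are invariant under any permutation of the indices $i_1,\ldots,i_m$. For $x\in\mathbb{R}^n$, $(\mathbb{A}x^{m-1})_i=\sum_{i_2,\ldots,i_m=1}^n a_{ii_2\ldots i_m}x_{i_2}\cdots x_{i_m}$, $i\in[n]$. A tensor $\mathbb{A}\in T_{m,n}$ is a $P$ tensor if for every nonzero $x\in\mathbb{R}^n$, $\max_{i\in[n]} x_i(\mathbb{A}x^{m-1})_i>0$. *)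

From mathcomp Require Import all_boot all_order all_algebra all_fingroup.
Set Implicit Arguments. Unset Strict Implicit. Unset Printing Implicit Defensive.
Import Order.TTheory GRing.Theory Num.Theory.
Local Open Scope ring_scope.

(* A real m-th order n-dimensional tensor: entries a_{i_1 ... i_m}, indexed by
   maps 'I_m -> 'I_n (position k |-> index i_{k+1}). *)
Definition tensor (R : Type) (m n : nat) := {ffun 'I_m -> 'I_n} -> R.

Definition symmetric_tensor (R : Type) (m n : nat) (A : tensor R m n) : Prop :=
  forall (s : 'S_m) (f : {ffun 'I_m -> 'I_n}), A [ffun k => f (s k)] = A f.

(* (A x^{m-1})_i = sum_{i_2..i_m} a_{i i_2 .. i_m} x_{i_2} ... x_{i_m}:
   sum over index maps f whose first position (k = 0) is i, of A f times the
   product of x at the remaining positions. *)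
Definition tensor_apply (R : numDomainType) (m n : nat) (A : tensor R m n)
  (x : 'I_n -> R) (i : 'I_n) : R :=
  \sum_(f : {ffun 'I_m -> 'I_n} | [forall k : 'I_m, (val k == 0%N) ==> (f k == i)])
     A f * \prod_(k : 'I_m | val k != 0%N) x (f k).

Definition P_tensor (R : realDomainType) (m n : nat) (A : tensor R m n) : Prop :=
  forall x : 'I_n -> R, (exists i, x i != 0) ->
    exists i : 'I_n, 0 < x i * tensor_apply A x i.

(* For odd m the map x |-> A x^{m-1} is even, since each of its terms is a
   product of m - 1 coordinates of x.  Hence x_i (A x^{m-1})_i is odd in x, and
   at a unit vector e_i0 it vanishes off i0; so the P condition cannot hold both
   at e_i0 and at -e_i0. *)
From mathcomp Require Import all_boot all_order all_algebra all_fingroup.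
Import Order.TTheory GRing.Theory Num.Theory.
Local Open Scope ring_scope.

Lemma card_ord_neq0 (m : nat) : #|(fun k : 'I_m => val k != 0%N)| = m.-1.
Proof.
case: m => [|m]; first by apply: eq_card0; case.
transitivity #|predC1 (@ord0 m)|; last by rewrite cardC1 card_ord.
by apply: eq_card => k; rewrite !inE.
Qed.

Lemma tensor_apply_opp (R : numDomainType) (m n : nat) (A : tensor R m n)
    (x : 'I_n -> R) (i : 'I_n) :
  odd m -> tensor_apply A (fun j => - x j) i = tensor_apply A x i.
Proof.
move=> odd_m; apply: eq_bigr => f _; congr (_ * _).
rewrite (prodrN (fun k : 'I_m => val k != 0%N)) card_ord_neq0.
have even_pred : ~~ odd m.-1 by case: (m) odd_m.
by rewrite -signr_odd (negbTE even_pred) mul1r.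
Qed.

Lemma odd_order_not_P_tensor (R : realDomainType) (m n : nat)
    (A : tensor R m n) :
  odd m -> (0 < n)%N -> ~ P_tensor A.
Proof.
move=> odd_m n_gt0 PA; pose i0 : 'I_n := Ordinal n_gt0.
pose e j : R := (j == i0)%:R.
have e_nz : exists j, e j != 0 by exists i0; rewrite /e eqxx oner_neq0.
have eN_nz : exists j, - e j != 0 by exists i0; rewrite /e eqxx oppr_eq0 oner_neq0.
have supp_i0 (c : R) j : 0 < c * e j * tensor_apply A e j -> j = i0.
  by rewrite /e; case: eqVneq => // _; rewrite mulr0 mul0r ltxx.
have [j pos] := PA e e_nz; rewrite -[e j]mul1r in pos.
have [j' neg] := PA _ eN_nz; rewrite tensor_apply_opp // -mulN1r in neg.
have j_i0 := supp_i0 _ _ pos; have j'_i0 := supp_i0 _ _ neg; subst j j'.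
rewrite mul1r in pos; rewrite mulN1r mulNr oppr_gt0 in neg.
by have := lt_trans pos neg; rewrite ltxx.
Qed.

Theorem corollary2p2 (R : realFieldType) (m n : nat) :
  odd m -> (0 < m)%N -> (0 < n)%N ->
  ~ (exists A : tensor R m n, ~ symmetric_tensor A /\ P_tensor A).
Proof.
by move=> odd_m _ n_gt0 [A [_]]; apply: odd_order_not_P_tensor.
Qed.
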